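(* There are a polynomial $p$ and a sequence $\{D_n\}_{n\ge1}$ of definite causal theories such that, for every $n$, $D_n$ is on signature $\{x_1,\dots,x_n\}$, the set of models of $D_n$ is exactly PARITY$_n$, and $|D_n|\le p(n)$.
   Context: A literal is a variable $x$ or its negation $\neg x$. A definite causal theory on signature $\{x_1,\dots,x_n\}$ is a finite set of causal rules $H\Leftarrow G$, where $H$ is a literal over $x_1,\dots,x_n$ or $\bot$, and $G$ is a propositional formula (connectives $\wedge,\vee,\neg$) over $x_1,\dots,x_n$. For $I\subseteq\{x_1,\dots,x_n\}$ (viewed as the interpretation making exactly the variables in $I$ true), the reduct $D^I$ is the set of heads $H$ of all rules $H\Leftarrow G$ of $D$ with $I\models G$. $I$ is a model of $D$ if $I$ is the unique interpretation of $\{x_1,\dots,x_n\}$ satisfying every element of $D^I$. The size $|D|$ of a (not necessarily simple) definite theory is the number of connectives occurring in it. Strings $w\in\{0,1\}^n$ are identified with $\{x_i:w_i=1\}$; PARITY$_n$ is the set of strings in $\{0,1\}^n$ with an odd number of 1's. *)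

From HB Require Import structures.
From mathcomp Require Import all_boot all_order all_algebra.
Set Implicit Arguments. Unset Strict Implicit. Unset Printing Implicit Defensive.

(* Propositional formulas over the signature {x_1,...,x_n}, variables
   indexed by 'I_n (x_(i+1) is Var i). Connectives: and, or, not. *)
Inductive formula (n : nat) : Type :=
| Var of 'I_n
| Neg of formula n
| And of formula n & formula n
| Or of formula n & formula n.

(* Interpretations: subsets of the variables (the true ones). *)
Definition interp (n : nat) := {set 'I_n}.

Fixpoint sat (n : nat) (I : interp n) (G : formula n) : bool :=
  match G with
  | Var i => i \in I
  | Neg g => ~~ sat I g
  | And g h => sat I g && sat I h
  | Or g h => sat I g || sat I h
  end.

(* A literal: a variable with a polarity (true = x, false = ~x). *)
Definition literal (n : nat) := ('I_n * bool)%type.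

(* A head: Some literal, or None for bottom. *)
Definition head (n : nat) := option (literal n).

Definition sat_head (n : nat) (I : interp n) (H : head n) : bool :=
  match H with
  | None => false
  | Some (i, b) => (i \in I) == b
  end.

Record rule (n : nat) := Rule { rhead : head n; rbody : formula n }.

Definition theory (n : nat) := seq (rule n).

Definition reduct (n : nat) (D : theory n) (I : interp n) : seq (head n) :=
  [seq rhead r | r <- D & sat I (rbody r)].

Definition is_model (n : nat) (D : theory n) (I : interp n) : Prop :=
  forall J : interp n, all (sat_head J) (reduct D I) <-> J = I.

(* Size: number of connectives occurring in the theory. *)
Fixpoint fsize (n : nat) (G : formula n) : nat :=
  match G with
  | Var _ => 0
  | Neg g => (fsize g).+1
  | And g h => (fsize g + fsize h).+1
  | Or g h => (fsize g + fsize h).+1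
  end.

Definition hsize (n : nat) (H : head n) : nat :=
  match H with
  | Some (_, false) => 1
  | _ => 0
  end.

Definition theory_size (n : nat) (D : theory n) : nat :=
  sumn [seq hsize (rhead r) + fsize (rbody r) | r <- D].

Definition parity (n : nat) (I : interp n) : bool := odd #|I|.

From HB Require Import structures.
From mathcomp Require Import all_boot all_order all_algebra.
From mathcomp Require Import zify.
Import GRing.Theory Num.Theory.

Set Implicit Arguments.
Unset Strict Implicit.
Unset Printing Implicit Defensive.

(* The rules [x <= x] and [~x <= ~x] for every variable force the unique
   interpretation satisfying the reduct at I to be I itself, and the rule
   [bot <= ~G] kills exactly the I falsifying G; so the models of this theory
   are the interpretations satisfying G.  Taking for G a balanced XOR tree of
   the variables gives parity; since XOR mentions each argument twice, the size
   s(m) of a tree over m variables obeys s(m) = 2 s(m/2) + 2 s(m - m/2) + 5,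
   which is quadratic in m. *)

Lemma all_sat_head_reduct n (D : theory n) (I J : interp n) :
  all (sat_head J) (reduct D I) =
  all (fun r => sat I (rbody r) ==> sat_head J (rhead r)) D.
Proof.
elim: D => //= r D IHD; rewrite /reduct /= in IHD *.
by case: (sat I (rbody r)); rewrite /= IHD.
Qed.

Definition literal_rules n : theory n :=
  [seq Rule (Some (i, b)) (if b then Var i else Neg (Var i))
  | i <- enum 'I_n, b <- [:: true; false]].

Definition constraint_theory n (G : formula n) : theory n :=
  literal_rules n ++ [:: Rule None (Neg G)].

Lemma all_sat_head_reduct_literal_rules n (I J : interp n) :
  all (sat_head J) (reduct (literal_rules n) I) = (J == I).
Proof.
rewrite all_sat_head_reduct.
apply/all_allpairsP/eqP => [sameJI | -> i b _ _]; last by case: b => /=; case: (i \in I).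
apply/setP => i; move: (sameJI i true) (sameJI i false).
rewrite mem_enum /= => /(_ isT isT) + /(_ isT isT).
by case: (i \in I); case: (i \in J).
Qed.

Lemma is_model_constraint_theory n (G : formula n) (I : interp n) :
  is_model (constraint_theory G) I <-> sat I G.
Proof.
have reductE J : all (sat_head J) (reduct (constraint_theory G) I) =
                 (J == I) && sat I G.
  rewrite all_sat_head_reduct all_cat -all_sat_head_reduct.
  rewrite all_sat_head_reduct_literal_rules /=.
  by case: (sat I G); rewrite /= ?andbT ?andbF.
split=> [/(_ I) [_ /(_ erefl)] | satG J]; first by rewrite reductE => /andP[].
by rewrite reductE satG andbT; split=> [/eqP | ->].
Qed.

Definition xor_formula n (g h : formula n) : formula n :=
  Or (And g (Neg h)) (And (Neg g) h).

Lemma sat_xor_formula n (I : interp n) g h :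
  sat I (xor_formula g h) = sat I g (+) sat I h.
Proof. by rewrite /=; case: (sat I g); case: (sat I h). Qed.

Definition falsum n : formula n.+1 := And (Var ord0) (Neg (Var ord0)).

(* [fuel] only serves as a termination measure: any [fuel >= size s] gives
   the same formula. *)
Fixpoint xor_tree n (fuel : nat) (s : seq 'I_n.+1) : formula n.+1 :=
  if fuel is fuel'.+1 then
    match s with
    | [::] => falsum n
    | [:: i] => Var i
    | _ => let m := (size s)./2 in
           xor_formula (xor_tree fuel' (take m s)) (xor_tree fuel' (drop m s))
    end
  else falsum n.

Definition parity_formula n : formula n.+1 := xor_tree n.+1 (enum 'I_n.+1).

Lemma xor_tree_split n fuel (s : seq 'I_n.+1) : 1 < size s ->
  xor_tree fuel.+1 s =
  xor_formula (xor_tree fuel (take (size s)./2 s)) (xor_tree fuel (drop (size s)./2 s)).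
Proof. by case: s => [|i [|j s]]. Qed.

Lemma sat_xor_tree n (I : interp n.+1) fuel s : size s <= fuel ->
  sat I (xor_tree fuel s) = odd (count (mem I) s).
Proof.
elim: fuel s => [|fuel IH] s le_s_fuel.
  by move: le_s_fuel; rewrite leqn0 => /nilP ->; rewrite /= andbN.
have [s_gt1 | ] := ltnP 1 (size s).
  rewrite xor_tree_split // sat_xor_formula !IH ?size_drop ?size_takel; try lia.
  by rewrite -oddD -count_cat cat_take_drop.
by case: s le_s_fuel => [|i []] //= _; rewrite ?andbN ?addn0 ?oddb.
Qed.

Lemma size_xor_tree n fuel (s : seq 'I_n.+1) : 0 < size s <= fuel ->
  fsize (xor_tree fuel s) + 3 <= 3 * size s ^ 2.
Proof.
elim: fuel s => [|fuel IH] s /andP[s_gt0 le_s_fuel]; first lia.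
have [s_gt1 | ] := ltnP 1 (size s); last first.
  by case: s s_gt0 le_s_fuel => [|i []].
rewrite xor_tree_split //.
have := IH (take (size s)./2 s); have := IH (drop (size s)./2 s).
rewrite size_drop size_takel; last lia.
move=> /(_ ltac:(lia)) size_drop_half /(_ ltac:(lia)) size_take_half /=.
nia.
Qed.

Lemma sat_parity_formula n (I : interp n.+1) : sat I (parity_formula n) = parity I.
Proof.
by rewrite sat_xor_tree ?size_enum_ord // /parity cardE {2}/enum_mem size_filter -enumT.
Qed.

Lemma size_parity_formula n : fsize (parity_formula n) + 3 <= 3 * n.+1 ^ 2.
Proof.
have := @size_xor_tree n n.+1 (enum 'I_n.+1).
by rewrite size_enum_ord leqnn; apply.
Qed.

Lemma theory_size_constraint_theory n (G : formula n) :
  theory_size (constraint_theory G) = 2 * n + (fsize G).+1.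
Proof.
rewrite /theory_size /constraint_theory map_cat sumn_cat /= addn0; congr (_ + _).
rewrite /literal_rules -[in RHS](size_enum_ord n).
by elim: (enum 'I_n) => [|i s IHs] //=; move: IHs => /= ->; rewrite mulnS.
Qed.

Definition parity_theory (n : nat) : theory n :=
  if n is n'.+1 then constraint_theory (parity_formula n') else [::].

Theorem mainTheorem19 :
  exists (p : {poly int}) (D : forall n : nat, theory n),
    forall n : nat, (1 <= n)%N ->
      (forall I : interp n, is_model (D n) I <-> parity I) /\
      ((theory_size (D n))%:Z <= p.[n%:Z])%R.
Proof.
exists ('X^2 *+ 5)%R, parity_theory => -[//|n] _; split=> [I|].
  by rewrite is_model_constraint_theory sat_parity_formula.
rewrite theory_size_constraint_theory hornerMn hornerXn.
have := size_parity_formula n; lia.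
Qed.
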